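(* For every $n\in\mathbb N$, the set $\{\mathrm{First}(n),\ \mathrm{Next}(\mathrm{First}(n)),\ \mathrm{Next}(\mathrm{Next}(\mathrm{First}(n))),\ldots\}$ of naturally labeled topologies obtained by iteratively applying $\mathrm{Next}$ to $\mathrm{First}(n)$ (until $\mathrm{Next}$ is undefined) is exactly the set of all naturally labeled topologies of size $n$.
   Context: Let $X_n=\{0,1,\ldots,n-1\}$. A naturally labeled (NL) poset on $X_n$ is a partial order $\preceq$ on $X_n$ with $x\preceq y\Rightarrow x\le y$. A topology of size $n$ is a set $T$ of subsets of $X_n$ containing $\emptyset$ and $X_n$ and closed under union and intersection; it is a naturally labeled topology (NLT) if it equals the set of order ideals (downward closed subsets) of some NL poset on $X_n$. Subsets of $X_n$ are identified with the increasing words of their elements, and the length-lexicographic order compares words first by length, then lexicographically. Definitions: for an NLT $T$ of size $n$ and $S\in T$, $\mathrm{Grow}_S(T)=T\cup\{U\cup\{n\}: U\in T,\ S\subseteq U\}$ (an NLT of size $n+1$). $\mathrm{First}(n)=\mathrm{Grow}_\emptyset^n(\{\emptyset\})$ ($n$-fold application starting from the size-$0$ topology $\{\emptyset\}$). For $T$ of size $n\ge1$, $\mathrm{Cut}(T)=\{U\in T: n-1\notin U\}$ (size $n-1$). For $S\in T$, $\mathrm{Next}_S(T)$ is the element of $T$ immediately following $S$ in the length-lexicographic order, undefined if $S$ is the last element of $T$. $\mathrm{Next}(\{\emptyset\})$ is undefined; for an NLT $T$ of size $n\ge1$, $\mathrm{Next}(T)$ is defined recursively: let $S$ be the smallest (for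 inclusion) set of $T$ containing $n-1$, $S'=S\setminus\{n-1\}$, $T'=\mathrm{Cut}(T)$; if $\mathrm{Next}_{S'}(T')$ is defined, $\mathrm{Next}(T)=\mathrm{Grow}_{S''}(T')$ with $S''=\mathrm{Next}_{S'}(T')$; otherwise, if $\mathrm{Next}(T')$ is defined, $\mathrm{Next}(T)=\mathrm{Grow}_\emptyset(\mathrm{Next}(T'))$; otherwise $\mathrm{Next}(T)$ is undefined. *)

(* Subsets of X_n = {0,...,n-1} are {set 'I_n};
   topologies of size n are {set {set 'I_n}}. *)
From mathcomp Require Import all_boot.
Set Implicit Arguments. Unset Strict Implicit. Unset Printing Implicit Defensive.

Definition is_poset n (R : rel 'I_n) : Prop :=
  [/\ reflexive R, antisymmetric R & transitive R].

Definition is_NL_poset n (R : rel 'I_n) : Prop :=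
  is_poset R /\ (forall x y : 'I_n, R x y -> x <= y).

Definition order_ideals n (R : rel 'I_n) : {set {set 'I_n}} :=
  [set A : {set 'I_n} | [forall x, forall y, R x y ==> (y \in A) ==> (x \in A)]].

Definition is_topology n (T : {set {set 'I_n}}) : Prop :=
  [/\ set0 \in T, [set: 'I_n] \in T,
      (forall U V, U \in T -> V \in T -> U :|: V \in T) &
      (forall U V, U \in T -> V \in T -> U :&: V \in T)].

Definition is_NLT n (T : {set {set 'I_n}}) : Prop :=
  is_topology T /\ exists R : rel 'I_n, is_NL_poset R /\ T = order_ideals R.

(* word of a subset = increasing list of its elements *)
Definition word n (A : {set 'I_n}) : seq nat := map val (enum A).

Fixpoint lex_lt (s t : seq nat) : bool :=
  match s, t with
  | [::], [::] => false
  | [::], _ :: _ => true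
  | _ :: _, [::] => false
  | x :: s', y :: t' => (x < y) || ((x == y) && lex_lt s' t')
  end.

Definition ll_lt n (A B : {set 'I_n}) : bool :=
  (size (word A) < size (word B)) ||
  ((size (word A) == size (word B)) && lex_lt (word A) (word B)).

Definition ll_le n (A B : {set 'I_n}) : bool := (A == B) || ll_lt A B.

Definition up n (U : {set 'I_n}) : {set 'I_n.+1} :=
  [set widen_ord (leqnSn n) x | x in U].

Definition down n (U : {set 'I_n.+1}) : {set 'I_n} :=
  [set x : 'I_n | widen_ord (leqnSn n) x \in U].

Definition Grow n (S : {set 'I_n}) (T : {set {set 'I_n}}) : {set {set 'I_n.+1}} :=
  [set up U | U in T] :|: [set (ord_max |: up U) | U in T & S \subset U].

Fixpoint First (n : nat) : {set {set 'I_n}} :=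
  match n with
  | 0 => [set set0]
  | m.+1 => Grow set0 (First m)
  end.

Definition Cut n (T : {set {set 'I_n.+1}}) : {set {set 'I_n}} :=
  [set down U | U in T & ord_max \notin U].

Definition NextS n (S : {set 'I_n}) (T : {set {set 'I_n}}) : option {set 'I_n} :=
  [pick U in T | ll_lt S U && [forall V in T, ll_lt S V ==> ll_le U V]].

(* smallest (for inclusion) set of T containing n-1 (T closed under ∩) *)
Definition smallest_with_max n (T : {set {set 'I_n.+1}}) : {set 'I_n.+1} :=
  \bigcap_(U in T | ord_max \in U) U.

Fixpoint Next (n : nat) : {set {set 'I_n}} -> option {set {set 'I_n}} :=
  match n return {set {set 'I_n}} -> option {set {set 'I_n}} with
  | 0 => fun _ => None
  | m.+1 => fun T =>
      let S := smallest_with_max T in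
      let S' := down S in
      let T' := Cut T in
      match NextS S' T' with
      | Some S'' => Some (Grow S'' T')
      | None => omap (Grow set0) (Next T')
      end
  end.

Fixpoint iterNext n (k : nat) (T : {set {set 'I_n}}) : option {set {set 'I_n}} :=
  match k with
  | 0 => Some T
  | k'.+1 => obind (@Next n) (iterNext k' T)
  end.

From mathcomp Require Import all_boot.
Set Implicit Arguments. Unset Strict Implicit. Unset Printing Implicit Defensive.

(* A topology on X_n is naturally labeled iff it contains every initial
   segment {0, ..., x-1}.  Such a topology T of size n+1 is Grow_S (Cut T),
   where S ∪ {n} is the smallest open set containing n, and conversely
   Grow_S T' is naturally labeled for every S ∈ T'.  Hence the topologies of
   size n+1 are the pairs (T', S) with S ∈ T', and Next enumerates these pairs
   lexicographically: S runs through T' in length-lexicographic order from its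
   minimum ∅, and after the last element of T' the pair becomes (Next T', ∅).
   By induction on n, starting from First (n+1) = Grow_∅ (First n), exactly
   these pairs are reached. *)

Section Reachability.

Variables (A : Type) (f : A -> option A).

Definition reaches x y := exists k, iter k (obind f) (Some x) = Some y.

Lemma reaches_refl x : reaches x x.
Proof. by exists 0. Qed.

Lemma reaches_trans x y z : reaches x y -> reaches y z -> reaches x z.
Proof. by move=> [k1 h1] [k2 h2]; exists (k2 + k1); rewrite iterD h1. Qed.

Lemma reaches_step x y z : reaches x y -> f y = Some z -> reaches x z.
Proof. by move=> [k h] hz; exists k.+1; rewrite iterS h. Qed.

Lemma reaches_ind (P : A -> Prop) x :
  P x -> (forall y z, reaches x y -> P y -> f y = Some z -> P z) ->
  forall y, reaches x y -> P y.
Proof.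
move=> Px IH y [k]; elim: k y => [|k IHk] y /=; first by case=> <-.
case e: (iter k _ _) => [y'|] //= hy.
by apply: IH hy; [exists k | exact: IHk].
Qed.

End Reachability.

Lemma reaches_map (A B : Type) (f : A -> option A) (h : B -> option B) (g : A -> B) x :
  (forall y z, reaches f x y -> f y = Some z -> h (g y) = Some (g z)) ->
  forall y, reaches f x y -> reaches h (g x) (g y).
Proof.
move=> hg; apply: (reaches_ind (P := fun y => reaches h (g x) (g y))) (reaches_refl _ _) _.
by move=> y z hy IH hz; apply: reaches_step IH (hg _ _ hy hz).
Qed.

Section SuccessorEnumeration.

Variables (A : finType) (lt : rel A).
Hypotheses (lt_irr : irreflexive lt) (lt_trans : transitive lt).
Hypothesis lt_total : forall x y, x != y -> lt x y || lt y x.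
Variable T : {set A}.

Definition succ_in x :=
  [pick y in T | lt x y && [forall z in T, lt x z ==> (y == z) || lt y z]].

Let rank x := #|[set y in T | lt y x]|.

Let rank_lt x y : x \in T -> lt x y -> rank x < rank y.
Proof.
move=> xT lt_xy; apply/proper_card/properP; split.
  by apply/subsetP => z; rewrite !inE => /andP [-> /lt_trans ->].
by exists x; rewrite !inE ?xT ?lt_xy ?lt_irr.
Qed.

Lemma succ_in_mem x y : succ_in x = Some y -> y \in T.
Proof. by rewrite /succ_in; case: pickP => // y' /andP [y'T _] [<-]. Qed.

Lemma succ_in_eq x y : y \in T -> lt x y ->
  (forall z, z \in T -> lt x z -> ~~ lt z y) -> succ_in x = Some y.
Proof.
move=> yT lt_xy no_between; rewrite /succ_in; case: pickP => [y' | /(_ y)].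
  case/andP=> y'T /andP [lt_xy' /forall_inP /(_ y yT)].
  rewrite lt_xy => /orP [/eqP -> // | lt_y'y].
  by move: (no_between y' y'T lt_xy'); rewrite lt_y'y.
rewrite yT lt_xy /= => /negbT/forall_inPn [z zT /negP[]].
apply/implyP => lt_xz; have [// | neq_yz] := eqVneq y z.
case/orP: (lt_total neq_yz) => [-> // | lt_zy].
by rewrite (negbTE (no_between z zT lt_xz)) in lt_zy.
Qed.

Lemma succ_in_None x : (forall z, z \in T -> ~~ lt x z) -> succ_in x = None.
Proof.
move=> x_max; rewrite /succ_in; case: pickP => // y /andP [yT /andP [lt_xy _]].
by move: (x_max y yT); rewrite lt_xy.
Qed.

Lemma reaches_succ_in_mem x y : x \in T -> reaches succ_in x y -> y \in T.
Proof.
by move=> xT; apply: (reaches_ind (P := fun z => z \in T)) => // ? ? _ _ /succ_in_mem.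
Qed.

Lemma reaches_succ_in m : m \in T -> (forall y, y \in T -> y != m -> lt m y) ->
  forall y, y \in T -> reaches succ_in m y.
Proof.
move=> mT m_min y; have [r] := ubnP (rank y); elim: r y => // r IH y /ltnSE rank_y yT.
have [-> | neq_ym] := eqVneq y m; first exact: reaches_refl.
pose B := [set z in T | lt z y].
have mB : m \in B by rewrite inE mT m_min.
case: (arg_maxnP rank mB) => p pB p_max.
have /[!inE] /andP [pT lt_py] : p \in B := pB.
apply: reaches_step (IH p (leq_trans (rank_lt pT lt_py) rank_y) pT) _.
apply: succ_in_eq => // z zT lt_pz; apply/negP => lt_zy.
have zB : z \in B by rewrite inE zT lt_zy.
by have := leq_trans (rank_lt pT lt_pz) (p_max z zB); rewrite ltnn.
Qed.

Lemma exists_succ_in_None m : m \in T -> exists2 l, l \in T & succ_in l = None.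
Proof.
move=> mT; case: (arg_maxnP rank mT) => l lT l_max; exists l => //.
apply: succ_in_None => z zT; apply/negP => lt_lz.
by have := leq_trans (rank_lt lT lt_lz) (l_max z zT); rewrite ltnn.
Qed.

End SuccessorEnumeration.

Lemma lex_lt_irr : irreflexive lex_lt.
Proof. by elim=> //= x s ->; rewrite ltnn eqxx. Qed.

Lemma lex_lt_trans : transitive lex_lt.
Proof.
move=> t s u; elim: s t u => [|x s IH] [|y t] [|z u] //=.
move=> /orP [lt_xy | /andP [/eqP <- lt_st]] /orP [lt_yz | /andP [/eqP <- lt_tu]].
- by rewrite (ltn_trans lt_xy lt_yz).
- by rewrite lt_xy.
- by rewrite lt_yz.
- by rewrite eqxx (IH _ _ lt_st lt_tu) orbT.
Qed.

Lemma lex_lt_total s t : s != t -> lex_lt s t || lex_lt t s.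
Proof.
elim: s t => [|x s IH] [|y t] //=.
by case: ltngtP => //= <-; rewrite eqseq_cons eqxx; apply: IH.
Qed.

Lemma word_inj n : injective (@word n).
Proof.
by move=> A B /(inj_map val_inj) eqAB; apply/setP => x; rewrite -mem_enum eqAB mem_enum.
Qed.

Lemma size_word n (A : {set 'I_n}) : size (word A) = #|A|.
Proof. by rewrite size_map cardE. Qed.

Lemma ll_lt_irr n : irreflexive (@ll_lt n).
Proof. by move=> A; rewrite /ll_lt ltnn eqxx lex_lt_irr. Qed.

Lemma ll_lt_trans n : transitive (@ll_lt n).
Proof.
move=> B A C; rewrite /ll_lt.
case/orP=> [lt_AB | /andP [/eqP eq_AB lex_AB]] /orP [lt_BC | /andP [/eqP eq_BC lex_BC]].
- by rewrite (ltn_trans lt_AB lt_BC).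
- by rewrite -eq_BC lt_AB.
- by rewrite eq_AB lt_BC.
- by rewrite eq_AB eq_BC eqxx (lex_lt_trans lex_AB lex_BC) orbT.
Qed.

Lemma ll_lt_total n (A B : {set 'I_n}) : A != B -> ll_lt A B || ll_lt B A.
Proof.
move=> neq_AB; rewrite /ll_lt; case: ltngtP => //= _.
by rewrite lex_lt_total // (inj_eq (@word_inj n)).
Qed.

Lemma ll_lt0s n (A : {set 'I_n}) : ll_lt set0 A = (A != set0).
Proof.
have [-> | neq_A0] := eqVneq A set0; first exact: ll_lt_irr.
by rewrite /ll_lt !size_word cards0 card_gt0 neq_A0.
Qed.

Lemma NextSE n (S : {set 'I_n}) (T : {set {set 'I_n}}) :
  NextS S T = succ_in (@ll_lt n) T S.
Proof. by []. Qed.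

Notation widenS := (widen_ord (leqnSn _)).

Lemma widenS_inj n : injective (widen_ord (leqnSn n)).
Proof. by move=> x y /(congr1 val) /= /val_inj. Qed.

Lemma widenS_eq_max n (x : 'I_n) : (widenS x == ord_max) = false.
Proof. by apply/negbTE; rewrite -val_eqE /= neq_ltn ltn_ord. Qed.

Lemma ord_max_or_widenS n (x : 'I_n.+1) : x = ord_max \/ exists y : 'I_n, x = widenS y.
Proof.
have [lt_xn | le_nx] := ltnP x n; first by right; exists (Ordinal lt_xn); apply: val_inj.
by left; apply/val_inj/eqP; rewrite /= eqn_leq le_nx -ltnS ltn_ord.
Qed.

Lemma mem_up n (U : {set 'I_n}) x : (widenS x \in up U) = (x \in U).
Proof. exact/mem_imset/widenS_inj. Qed.

Lemma ord_max_notin_up n (U : {set 'I_n}) : (ord_max \in up U) = false.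
Proof. by apply/negbTE/imsetP => -[y _ /eqP]; rewrite eq_sym widenS_eq_max. Qed.

Lemma mem_down n (U : {set 'I_n.+1}) x : (x \in down U) = (widenS x \in U).
Proof. by rewrite inE. Qed.

Lemma down_up n (U : {set 'I_n}) : down (up U) = U.
Proof. by apply/setP => x; rewrite mem_down mem_up. Qed.

Lemma down_setU1_up n (U : {set 'I_n}) : down (ord_max |: up U) = U.
Proof. by apply/setP => x; rewrite mem_down !inE widenS_eq_max mem_up. Qed.

Lemma up_downE n (V : {set 'I_n.+1}) : up (down V) = V :&: [set x : 'I_n.+1 | x < n].
Proof.
apply/setP => x; have [-> | [y ->]] := ord_max_or_widenS x.
  by rewrite ord_max_notin_up !inE ltnn andbF.
by rewrite mem_up mem_down !inE /= ltn_ord andbT.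
Qed.

Lemma up_down n (V : {set 'I_n.+1}) : ord_max \notin V -> up (down V) = V.
Proof.
move=> maxNV; apply/setP => x; rewrite up_downE !inE.
have [-> | [y ->]] := ord_max_or_widenS x; first by rewrite (negbTE maxNV).
by rewrite /= ltn_ord andbT.
Qed.

Lemma setU1_up_down n (V : {set 'I_n.+1}) : ord_max \in V -> ord_max |: up (down V) = V.
Proof.
move=> maxV; apply/setP => x; rewrite up_downE !inE.
have [-> | [y ->]] := ord_max_or_widenS x; first by rewrite eqxx maxV.
by rewrite widenS_eq_max /= ltn_ord andbT.
Qed.

Lemma downU n (U V : {set 'I_n.+1}) : down (U :|: V) = down U :|: down V.
Proof. by apply/setP => x; rewrite !inE. Qed.

Lemma downI n (U V : {set 'I_n.+1}) : down (U :&: V) = down U :&: down V.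
Proof. by apply/setP => x; rewrite !inE. Qed.

Lemma down0 n : down (set0 : {set 'I_n.+1}) = set0.
Proof. by apply/setP => x; rewrite !inE. Qed.

Lemma downT n : down [set: 'I_n.+1] = [set: 'I_n].
Proof. by apply/setP => x; rewrite !inE. Qed.

Lemma upU n (U V : {set 'I_n}) : up (U :|: V) = up U :|: up V.
Proof. exact: imsetU. Qed.

Lemma upI n (U V : {set 'I_n}) : up (U :&: V) = up U :&: up V.
Proof. by apply: imsetI => x y _ _; apply: widenS_inj. Qed.

Lemma up0 n : up (set0 : {set 'I_n}) = set0.
Proof. exact: imset0. Qed.

Lemma upT n : up [set: 'I_n] = [set x : 'I_n.+1 | x < @ord_max n].
Proof. by rewrite -downT up_downE setTI. Qed.

Lemma up_initial_segment n (y : 'I_n) :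
  up [set x : 'I_n | x < y] = [set x : 'I_n.+1 | x < y].
Proof.
apply/setP => x; have [-> | [z ->]] := ord_max_or_widenS x; last by rewrite mem_up !inE.
by rewrite ord_max_notin_up inE /= ltnNge ltnW.
Qed.

Lemma down_initial_segment n (y : 'I_n.+1) :
  down [set x : 'I_n.+1 | x < y] = [set x : 'I_n | x < y].
Proof. by apply/setP => x; rewrite !inE. Qed.

Definition NL_topology n (T : {set {set 'I_n}}) :=
  is_topology T /\ forall y : 'I_n, [set x : 'I_n | x < y] \in T.

Section TopologyClosure.

Variables (n : nat) (T : {set {set 'I_n}}).
Hypothesis T_top : is_topology T.

Lemma topology_bigcap (I : finType) (P : pred I) (F : I -> {set 'I_n}) :
  (forall i, P i -> F i \in T) -> \bigcap_(i | P i) F i \in T.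
Proof. by case: T_top => _ T_T _ T_I F_T; apply big_ind. Qed.

Lemma topology_bigcup (I : finType) (P : pred I) (F : I -> {set 'I_n}) :
  (forall i, P i -> F i \in T) -> \bigcup_(i | P i) F i \in T.
Proof. by case: T_top => T_0 _ T_U _ F_T; apply big_ind. Qed.

End TopologyClosure.

Definition specialization n (T : {set {set 'I_n}}) : rel 'I_n :=
  [rel x y | [forall V in T, (y \in V) ==> (x \in V)]].

Lemma specialization_trans n (T : {set {set 'I_n}}) : transitive (specialization T).
Proof.
move=> y x z /forall_inP R_xy /forall_inP R_yz; apply/forall_inP => V VT.
by apply/implyP => /(implyP (R_yz V VT)) /(implyP (R_xy V VT)).
Qed.

Lemma order_ideals_specialization n (T : {set {set 'I_n}}) :
  is_topology T -> order_ideals (specialization T) = T.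
Proof.
move=> T_top; apply/setP => A; apply/idP/idP => [| AT]; last first.
  rewrite inE; apply/forallP => x; apply/forallP => y.
  by apply/implyP => /forall_inP/(_ _ AT).
rewrite inE => /forallP A_down.
have -> : A = \bigcup_(y in A) \bigcap_(V in T | y \in V) V.
  apply/setP => x; apply/idP/bigcupP => [xA | [y yA /bigcapP x_hull]].
    by exists x => //; apply/bigcapP => V /andP [].
  have R_xy : specialization T x y.
    by apply/forall_inP => V VT; apply/implyP => yV; apply: x_hull; rewrite VT.
  exact: (implyP (implyP (forallP (A_down x) y) R_xy)).
by apply: topology_bigcup => // y _; apply: topology_bigcap => // V /andP [].
Qed.

Lemma specialization_NL_poset n (T : {set {set 'I_n}}) :
  NL_topology T -> is_NL_poset (specialization T).
Proof.
case=> _ T_seg; have R_le x y : specialization T x y -> x <= y.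
  by move/forall_inP/(_ _ (T_seg x)); rewrite !inE ltnn; case: ltngtP => // _ /(_ isT).
split=> //; split; last exact: specialization_trans.
  by move=> x; apply/forall_inP => V _; apply/implyP.
by move=> x y /andP [/R_le le_xy /R_le le_yx]; apply/val_inj/eqP; rewrite eqn_leq le_xy.
Qed.

Lemma NL_topologyP n (T : {set {set 'I_n}}) : is_NLT T <-> NL_topology T.
Proof.
split=> [[T_top [R [[_ R_le] eq_T]]] | T_NL].
  split=> // y; rewrite eq_T inE; apply/forallP => x; apply/forallP => z.
  by apply/implyP => R_xz; rewrite !inE; apply/implyP/leq_ltn_trans/R_le.
have [T_top _] := T_NL; split=> //; exists (specialization T).
by rewrite order_ideals_specialization //; split=> //; apply: specialization_NL_poset.
Qed.

Lemma mem_Grow n (S : {set 'I_n}) (T : {set {set 'I_n}}) V :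
  (V \in Grow S T) = (down V \in T) && ((ord_max \in V) ==> (S \subset down V)).
Proof.
rewrite /Grow inE; apply/orP/andP => [[] /imsetP [U] | [downV_T]].
- by move=> UT ->; rewrite down_up ord_max_notin_up.
- by rewrite inE => /andP [UT sub_SU] ->; rewrite down_setU1_up UT sub_SU setU11.
case maxV: (ord_max \in V) => /= sub_S.
  by right; apply/imsetP; exists (down V); rewrite ?inE ?downV_T ?sub_S ?setU1_up_down.
by left; apply/imsetP; exists (down V); rewrite ?up_down ?maxV.
Qed.

Lemma mem_Cut n (T : {set {set 'I_n.+1}}) W : (W \in Cut T) = (up W \in T).
Proof.
apply/imsetP/idP => [[U] | upW_T].
  by rewrite inE => /andP [UT maxNU] ->; rewrite up_down.
by exists (up W); rewrite ?inE ?upW_T ?ord_max_notin_up ?down_up.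
Qed.

Lemma Cut_Grow n (S : {set 'I_n}) (T : {set {set 'I_n}}) : Cut (Grow S T) = T.
Proof. by apply/setP => W; rewrite mem_Cut mem_Grow down_up ord_max_notin_up andbT. Qed.

Lemma NL_topology_Grow n (S : {set 'I_n}) (T : {set {set 'I_n}}) :
  NL_topology T -> S \in T -> NL_topology (Grow S T).
Proof.
case=> [[T_0 T_T T_U T_I] T_seg] ST; split; first split.
- by rewrite mem_Grow down0 T_0 inE.
- by rewrite mem_Grow downT T_T subsetT implybT.
- move=> U V; rewrite !mem_Grow downU inE => /andP [UT sub_U] /andP [VT sub_V].
  rewrite T_U //=; apply/implyP => /orP [/(implyP sub_U) | /(implyP sub_V)] sub_S.
    exact: subset_trans sub_S (subsetUl _ _).
  exact: subset_trans sub_S (subsetUr _ _).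
- move=> U V; rewrite !mem_Grow downI inE => /andP [UT sub_U] /andP [VT sub_V].
  by rewrite T_I //= subsetI; apply/implyP => /andP [/(implyP sub_U) -> /(implyP sub_V)].
- move=> y; rewrite mem_Grow down_initial_segment inE /= ltnNge -ltnS ltn_ord andbT.
  have [lt_yn | le_ny] := ltnP y n.
    suff -> : [set x : 'I_n | x < y] = [set x : 'I_n | x < Ordinal lt_yn] by apply: T_seg.
    by apply/setP => x; rewrite !inE.
  suff -> : [set x : 'I_n | x < y] = setT by apply: T_T.
  by apply/setP => x; rewrite !inE (leq_trans _ le_ny).
Qed.

Lemma NL_topology_Cut n (T : {set {set 'I_n.+1}}) : NL_topology T -> NL_topology (Cut T).
Proof.
case=> [[T_0 T_T T_U T_I] T_seg]; split; first split.
- by rewrite mem_Cut up0.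
- by rewrite mem_Cut upT (T_seg ord_max).
- by move=> U V; rewrite !mem_Cut upU; apply: T_U.
- by move=> U V; rewrite !mem_Cut upI; apply: T_I.
- by move=> y; rewrite mem_Cut up_initial_segment (T_seg (widenS y)).
Qed.

Lemma ord_max_in_smallest_with_max n (T : {set {set 'I_n.+1}}) :
  ord_max \in smallest_with_max T.
Proof. by apply/bigcapP => V /andP []. Qed.

Lemma smallest_with_max_mem n (T : {set {set 'I_n.+1}}) :
  is_topology T -> smallest_with_max T \in T.
Proof. by move=> T_top; apply: topology_bigcap => // V /andP []. Qed.

Lemma smallest_with_max_sub n (T : {set {set 'I_n.+1}}) V :
  V \in T -> ord_max \in V -> smallest_with_max T \subset V.
Proof. by move=> VT maxV; apply: bigcap_inf; rewrite VT maxV. Qed.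

Lemma down_smallest_with_max_Grow n (S : {set 'I_n}) (T : {set {set 'I_n}}) :
  S \in T -> down (smallest_with_max (Grow S T)) = S.
Proof.
move=> ST; apply/eqP; rewrite eqEsubset; apply/andP; split.
  have SU1_Grow : ord_max |: up S \in Grow S T.
    by rewrite mem_Grow down_setU1_up ST subxx implybT.
  have sub_M := subsetP (smallest_with_max_sub SU1_Grow (setU11 _ _)).
  by apply/subsetP => x; rewrite mem_down => /sub_M; rewrite !inE widenS_eq_max mem_up.
apply/subsetP => x xS; rewrite mem_down; apply/bigcapP => V /andP [].
by rewrite mem_Grow => /andP [_ /implyP sub_S] /sub_S /subsetP /(_ x xS); rewrite mem_down.
Qed.

Lemma down_smallest_with_max_in_Cut n (T : {set {set 'I_n.+1}}) :
  NL_topology T -> down (smallest_with_max T) \in Cut T.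
Proof.
case=> T_top T_seg; have [_ _ _ T_I] := T_top.
by rewrite mem_Cut up_downE T_I ?(T_seg ord_max) ?smallest_with_max_mem.
Qed.

Lemma Grow_Cut n (T : {set {set 'I_n.+1}}) :
  NL_topology T -> Grow (down (smallest_with_max T)) (Cut T) = T.
Proof.
case=> T_top T_seg; have [_ _ T_U T_I] := T_top.
have M_T := smallest_with_max_mem T_top.
apply/setP => V; rewrite mem_Grow mem_Cut up_downE.
apply/andP/idP => [[V'_T] | VT]; last first.
  rewrite T_I ?(T_seg ord_max) //; split=> //; apply/implyP => maxV.
  by apply/subsetP => x; rewrite !mem_down; apply/subsetP/smallest_with_max_sub.
case maxV: (ord_max \in V) => /= sub_M; last first.
  by rewrite -up_downE up_down ?maxV in V'_T.
suff -> : V = (V :&: [set x : 'I_n.+1 | x < @ord_max n]) :|: smallest_with_max T.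
  exact: T_U.
apply/setP => x; rewrite !inE; have [-> | [y ->]] := ord_max_or_widenS x.
  by rewrite maxV ord_max_in_smallest_with_max orbT.
rewrite /= ltn_ord andbT; apply/idP/orP => [-> | [] //]; first by left.
by rewrite -!mem_down => /(subsetP sub_M).
Qed.

Lemma NextE n (T : {set {set 'I_n.+1}}) :
  Next T = match NextS (down (smallest_with_max T)) (Cut T) with
           | Some S' => Some (Grow S' (Cut T))
           | None => omap (Grow set0) (Next (Cut T))
           end.
Proof. by []. Qed.

Lemma Next_Grow n (S : {set 'I_n}) (T : {set {set 'I_n}}) : S \in T ->
  Next (Grow S T) = match NextS S T with
                    | Some S' => Some (Grow S' T)
                    | None => omap (Grow set0) (Next T)
                    end.
Proof. by move=> ST; rewrite NextE Cut_Grow down_smallest_with_max_Grow. Qed.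

Lemma sets_ord0 (U : {set 'I_0}) : U = set0.
Proof. by apply/setP => -[]. Qed.

Lemma NL_topology_First n : NL_topology (First n).
Proof.
elim: n => [|n IH]; last by apply: NL_topology_Grow; case: IH => -[].
split=> [|[]//]; split=> [||U V _ _|U V _ _]; rewrite inE; apply/eqP; exact: sets_ord0.
Qed.

Lemma NL_topology_Next n (T T' : {set {set 'I_n}}) :
  NL_topology T -> Next T = Some T' -> NL_topology T'.
Proof.
elim: n T T' => // n IH T T' /NL_topology_Cut T'_NL; rewrite NextE.
case NextS_M: NextS => [S|] => [[<-] | ].
  exact: NL_topology_Grow T'_NL (succ_in_mem NextS_M).
case Next_T': Next => [T''|] // [<-].
by apply: NL_topology_Grow; [exact: IH Next_T' | case: (IH _ _ T'_NL Next_T') => -[]].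
Qed.

Lemma reaches_NL_topology n (T : {set {set 'I_n}}) :
  reaches (@Next n) (First n) T -> NL_topology T.
Proof.
move: T; apply: (reaches_ind (P := @NL_topology n)) (NL_topology_First n) _.
by move=> T1 T2 _; apply: NL_topology_Next.
Qed.

Lemma reaches_Grow n (T : {set {set 'I_n}}) S :
  set0 \in T -> S \in T -> reaches (@Next n.+1) (Grow set0 T) (Grow S T).
Proof.
move=> T_0 ST.
have S_reached : reaches (succ_in (@ll_lt n) T) set0 S.
  apply: (reaches_succ_in (@ll_lt_irr n) (@ll_lt_trans n) (@ll_lt_total n)) => // U _.
  by rewrite ll_lt0s.
apply: (reaches_map (g := fun S => Grow S T)) S_reached => U U' U_reached NextS_U.
by rewrite Next_Grow ?NextSE ?NextS_U // (reaches_succ_in_mem T_0 U_reached).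
Qed.

Lemma reaches_Grow_set0 n (T : {set {set 'I_n}}) :
  reaches (@Next n) (First n) T -> reaches (@Next n.+1) (First n.+1) (Grow set0 T).
Proof.
pose P T := reaches (@Next n.+1) (First n.+1) (Grow set0 T).
move: T; apply: (reaches_ind (P := P)) (reaches_refl _ _) _.
move=> T1 T2 T1_reached Grow_T1_reached Next_T1.
have [[T1_0 _ _ _] _] := reaches_NL_topology T1_reached.
have [L LT1 NextS_L] := exists_succ_in_None (@ll_lt_irr n) (@ll_lt_trans n) T1_0.
apply: reaches_step (reaches_trans Grow_T1_reached (reaches_Grow T1_0 LT1)) _.
by rewrite Next_Grow // NextSE NextS_L Next_T1.
Qed.

Lemma NL_topology_reaches n (T : {set {set 'I_n}}) :
  NL_topology T -> reaches (@Next n) (First n) T.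
Proof.
elim: n T => [|n IH] T T_NL.
  suff -> : T = First 0 by apply: reaches_refl.
  by apply/setP => U; rewrite (sets_ord0 U) inE eqxx; case: T_NL => -[].
have Cut_NL := NL_topology_Cut T_NL; have [[Cut_0 _ _ _] _] := Cut_NL.
rewrite -(Grow_Cut T_NL).
apply: reaches_trans (reaches_Grow_set0 (IH _ Cut_NL)) _.
exact: reaches_Grow Cut_0 (down_smallest_with_max_in_Cut T_NL).
Qed.

Lemma iterNextE n k (T : {set {set 'I_n}}) :
  iterNext k T = iter k (obind (@Next n)) (Some T).
Proof. by elim: k => //= k ->. Qed.

Theorem theorem5p11 (n : nat) (T : {set {set 'I_n}}) :
  (exists k : nat, iterNext k (First n) = Some T) <-> is_NLT T.
Proof.
split=> [[k] | /NL_topologyP /NL_topology_reaches [k]].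
  rewrite iterNextE => reached; apply/NL_topologyP/reaches_NL_topology.
  by exists k.
by exists k; rewrite iterNextE.
Qed.
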